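(* Let $p$ be an indecomposable permutation avoiding $3241$ and $4321$ that contains the pattern $321$, with associated triple $(a,b,c)$. If $c$ is finite, then $c>b$.
   Context: Permutations of $[n]$ are in one-line notation; pattern containment/avoidance is in the usual classical sense. Indecomposable: no $k$ with $1\le k\le n-1$ and $\{p_1,\dots,p_k\}=\{1,\dots,k\}$. An entry is a left-to-right maximum (LRMax) if it exceeds all entries to its left. For a $321$-containing permutation $p$, the associated triple $(a,b,c)$ is: $a$ is the rightmost entry of $p$ that plays the role of the ''1'' in some occurrence of $321$; $b$ is the rightmost entry to the left of $a$ that exceeds $a$; $c$ is the first entry to the right of $a$ that is not a LRMax, with $c=\infty$ if no such entry exists. *)

From mathcomp Require Import all_boot.
Set Implicit Arguments. Unset Strict Implicit. Unset Printing Implicit Defensive.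

(* A permutation of [n] in one-line notation: the sequence p_1 ... p_n,
   stored as a seq nat; positions are 0-indexed (entry p_{i+1} = nth 0 p i). *)
Definition is_perm (p : seq nat) : Prop := perm_eq p (iota 1 (size p)).

Definition ent (p : seq nat) (i : nat) : nat := nth 0 p i.

Definition order_iso (t q : seq nat) : Prop :=
  size t = size q /\
  forall i j, i < size q -> j < size q -> (ent t i < ent t j) = (ent q i < ent q j).

Definition contains (p q : seq nat) : Prop :=
  exists t, subseq t p /\ order_iso t q.

Definition avoids (p q : seq nat) : Prop := ~ contains p q.

Definition indecomposable (p : seq nat) : Prop :=
  forall k, 1 <= k -> k <= (size p).-1 -> ~ perm_eq (take k p) (iota 1 k).

Definition plays_one_in_321 (p : seq nat) (k : nat) : Prop :=
  exists i j, [/\ i < j, j < k, k < size p,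
                  ent p j < ent p i & ent p k < ent p j].

Definition is_a_pos (p : seq nat) (ka : nat) : Prop :=
  plays_one_in_321 p ka /\ forall k, plays_one_in_321 p k -> k <= ka.

Definition is_b_pos (p : seq nat) (ka kb : nat) : Prop :=
  [/\ kb < ka, ent p ka < ent p kb &
      forall j, kb < j -> j < ka -> ~ (ent p ka < ent p j)].

Definition is_LRMax (p : seq nat) (k : nat) : Prop :=
  forall i, i < k -> ent p i < ent p k.

(* position kc holds c (finite case): the first entry to the right of a
   that is not a LRMax *)
Definition is_c_pos (p : seq nat) (ka kc : nat) : Prop :=
  [/\ ka < kc, kc < size p, ~ is_LRMax p kc &
      forall k, ka < k -> k < kc -> is_LRMax p k].

From mathcomp Require Import all_boot.

(* Suppose c < b.  If some entry left of b exceeded b, it would form a 321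
   with b and c, whose "1" lies right of a, contradicting the choice of a; so b
   is a left-to-right maximum.  Take a 321 occurrence x y a ending at a.  Since
   y > a lies left of a, it is not right of b, and it is not b itself since
   x > y precedes it; so x y b a is an occurrence of 3241. *)

Lemma sorted_ltn_subseq_iota (ks : seq nat) n :
  sorted ltn ks -> all (gtn n) ks -> subseq ks (iota 0 n).
Proof.
move=> ks_sorted /allP ks_lt.
have -> : ks = [seq k <- iota 0 n | k \in ks].
  apply: (irr_sorted_eq ltn_trans ltnn) => //.
    exact: (sorted_filter ltn_trans _ (iota_ltn_sorted 0 n)).
  move=> k; rewrite mem_filter mem_iota add0n.
  by apply/idP/andP => [k_ks | []//]; split=> //; exact: ks_lt.
exact: filter_subseq.
Qed.

Lemma subseq_map_nth (T : eqType) (x0 : T) (s : seq T) (ks : seq nat) :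
  sorted ltn ks -> all (gtn (size s)) ks -> subseq [seq nth x0 s k | k <- ks] s.
Proof.
move=> ks_sorted ks_lt; rewrite -[s in subseq _ s](mkseq_nth x0).
exact/map_subseq/sorted_ltn_subseq_iota.
Qed.

Lemma contains_at (p q : seq nat) (ks : seq nat) :
  sorted ltn ks -> all (gtn (size p)) ks -> order_iso [seq ent p k | k <- ks] q ->
  contains p q.
Proof.
by move=> ks_sorted ks_lt iso; exists [seq ent p k | k <- ks]; rewrite subseq_map_nth.
Qed.

Lemma order_iso_3241 (x3 x2 x4 x1 : nat) :
  x1 < x2 -> x2 < x3 -> x3 < x4 -> order_iso [:: x3; x2; x4; x1] [:: 3; 2; 4; 1].
Proof.
move=> lt12 lt23 lt34; split=> // i j.
have lt13 := ltn_trans lt12 lt23; have lt24 := ltn_trans lt23 lt34.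
have lt14 := ltn_trans lt13 lt34.
by do 4?[case: i => [|i]]; do 4?[case: j => [|j]];
   rewrite /ent //= ?ltnn ?lt12 ?lt23 ?lt34 ?lt13 ?lt24 ?lt14 // => _ _;
   apply/negbTE; rewrite -leqNgt; apply: ltnW.
Qed.

Lemma perm_ent_inj {p : seq nat} {i j} : is_perm p -> i < size p -> j < size p ->
  ent p i = ent p j -> i = j.
Proof.
move=> p_perm ip jp /eqP; rewrite /ent nth_uniq ?(perm_uniq p_perm) ?iota_uniq //.
by move/eqP.
Qed.

Lemma LRMax_b_of_c_below_b {p : seq nat} {ka kb kc} :
  is_perm p -> is_a_pos p ka -> is_b_pos p ka kb ->
  ka < kc -> kc < size p -> ent p kc < ent p kb -> is_LRMax p kb.
Proof.
move=> p_perm [_ a_rightmost] [kb_ka _ _] ka_kc kc_p c_b i i_kb.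
have kb_p : kb < size p by rewrite (ltn_trans kb_ka) // (ltn_trans ka_kc).
case: ltngtP => // [b_i | /(perm_ent_inj p_perm (ltn_trans i_kb kb_p) kb_p) i_eq_kb];
  last by move: i_kb; rewrite i_eq_kb ltnn.
have c_plays_one : plays_one_in_321 p kc.
  by exists i, kb; split=> //; exact: ltn_trans ka_kc.
by move: (a_rightmost kc c_plays_one); rewrite leqNgt ka_kc.
Qed.

Lemma contains_3241_of_LRMax_b {p : seq nat} {ka kb} :
  plays_one_in_321 p ka -> is_b_pos p ka kb -> is_LRMax p kb ->
  contains p [:: 3; 2; 4; 1].
Proof.
move=> [i [j [i_j j_ka ka_p j_i a_j]]] [kb_ka _ b_rightmost] b_LRMax.
have j_kb : j <= kb by rewrite leqNgt; apply/negP => kb_j; exact: (b_rightmost j).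
have {}j_kb : j < kb.
  rewrite ltn_neqAle j_kb andbT; apply/eqP => j_eq_kb.
  by move: (b_LRMax i); rewrite -j_eq_kb => /(_ i_j); rewrite ltnNge (ltnW j_i).
apply: (@contains_at _ _ [:: i; j; kb; ka]) => /=.
- by rewrite i_j j_kb kb_ka.
- by rewrite ka_p !(ltn_trans _ ka_p) // (ltn_trans i_j).
- exact/order_iso_3241/b_LRMax/(ltn_trans i_j).
Qed.

Theorem corollary5 (p : seq nat) :
  is_perm p -> indecomposable p ->
  avoids p [:: 3; 2; 4; 1] -> avoids p [:: 4; 3; 2; 1] ->
  contains p [:: 3; 2; 1] ->
  forall ka kb kc : nat,
    is_a_pos p ka -> is_b_pos p ka kb -> is_c_pos p ka kc ->
    ent p kb < ent p kc.
Proof.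
move=> p_perm _ avoid3241 _ _ ka kb kc a_pos b_pos [ka_kc kc_p _ _].
have kb_ka : kb < ka by case: b_pos.
have kb_p : kb < size p by rewrite (ltn_trans kb_ka) // (ltn_trans ka_kc).
case: ltngtP => // [c_b | /(perm_ent_inj p_perm kb_p kc_p) kb_eq_kc].
- case: avoid3241; apply: (contains_3241_of_LRMax_b (proj1 a_pos) b_pos).
  exact: (LRMax_b_of_c_below_b p_perm a_pos b_pos ka_kc kc_p c_b).
- by move: (ltn_trans kb_ka ka_kc); rewrite kb_eq_kc ltnn.
Qed.
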